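(* Let $P\subset\mathbb C$ be a convex polygon having two edges parallel to the real axis, each of length $1$. Let $t_1<t_2<\cdots<t_m$ be real numbers. Then $$\max_{i=1,\dots,m-1}(t_{i+1}-t_i)\leq 1$$ if and only if $\bigcup_{i=1}^m (P+t_i)$ is a convex set.
   Context: $\mathbb C$ is identified with $\mathbb R^2$. For $t\in\mathbb C$, $P+t=\{x+t\mid x\in P\}$. A polygon may degenerate to a segment (regarded as having two overlapping edges). *)

From HB Require Import structures.
From mathcomp Require Import all_boot all_order all_algebra.
From mathcomp Require Import reals.
Set Implicit Arguments. Unset Strict Implicit. Unset Printing Implicit Defensive.
Import Order.TTheory GRing.Theory Num.Theory.
Local Open Scope ring_scope.

Section Defs.
Variable R : realType.

(* points of the plane C = R^2: (real part, imaginary part) *)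
Definition pt := (R * R)%type.

Definition convex_set (S : pt -> Prop) : Prop :=
  forall (p q : pt) (l : R), S p -> S q -> 0 <= l -> l <= 1 ->
    S ((1 - l) * p.1 + l * q.1, (1 - l) * p.2 + l * q.2).

Definition conv_hull (n : nat) (v : 'I_n -> pt) (z : pt) : Prop :=
  exists w : 'I_n -> R,
    (forall i, 0 <= w i) /\ \sum_(i < n) w i = 1 /\
    z = (\sum_(i < n) w i * (v i).1, \sum_(i < n) w i * (v i).2).

Definition convex_polygon (P : pt -> Prop) : Prop :=
  exists (n : nat) (v : 'I_n -> pt), (0 < n)%N /\ forall z, P z <-> conv_hull v z.

(* P has two edges parallel to the real axis, each of length 1: the bottom
   supporting horizontal line Im z = a and the top one Im z = b both meet P in
   a horizontal segment of length 1.  (a = b is the degenerate case where P is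
   a horizontal segment of length 1, regarded as two overlapping edges.) *)
Definition two_horizontal_unit_edges (P : pt -> Prop) : Prop :=
  exists a b x0 x1 : R,
    (forall z, P z -> a <= z.2 /\ z.2 <= b) /\
    (forall z, (P z /\ z.2 = a) <-> (z.2 = a /\ x0 <= z.1 /\ z.1 <= x0 + 1)) /\
    (forall z, (P z /\ z.2 = b) <-> (z.2 = b /\ x1 <= z.1 /\ z.1 <= x1 + 1)).

Definition translate (P : pt -> Prop) (t : R) (z : pt) : Prop := P (z.1 - t, z.2).

Definition union_translates (P : pt -> Prop) (m : nat) (t : nat -> R) (z : pt) : Prop :=
  exists i : nat, (i < m)%N /\ translate P (t i) z.

End Defs.

From HB Require Import structures.
From mathcomp Require Import all_boot all_order all_algebra.
From mathcomp Require Import reals.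
From mathcomp Require Import ring lra.
Import Order.TTheory GRing.Theory Num.Theory.
Set Implicit Arguments. Unset Strict Implicit. Unset Printing Implicit Defensive.
Local Open Scope ring_scope.

(* Convex combinations of the bottom and top unit edges of P show that every
   horizontal slice of P is a segment of length at least 1.  A point of the
   segment between z in P + t_i and z' in P + t_j splits as w + s, with w in
   the slice of P at its height and s between t_i and t_j; if consecutive
   t's are at most 1 apart, some t_k lies in the interval of length >= 1
   obtained by translating that slice, so the point lies in P + t_k.
   Conversely a gap t_(i+1) - t_i > 1 leaves a hole on the bottom line. *)

Section ConvexPlanarSets.
Variable R : realType.

Lemma convex_polygon_convex (P : pt R -> Prop) : convex_polygon P -> convex_set P.
Proof.
case=> n [v [_ HP]] p q l /HP [wp [wp0 [wp1 ->]]] /HP [wq [wq0 [wq1 ->]]] l0 l1.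
apply/HP; exists (fun i => (1 - l) * wp i + l * wq i); split; [|split].
- by move=> i; apply: addr_ge0; apply: mulr_ge0 => //; lra.
- by rewrite big_split /= -!mulr_sumr wp1 wq1; ring.
- by congr (_, _) => /=; rewrite !mulr_sumr -big_split /=; apply: eq_bigr => i _; ring.
Qed.

Variable P : pt R -> Prop.
Hypothesis convP : convex_set P.

Lemma convex_set_hsegment (u v x y : R) :
  P (u, y) -> P (v, y) -> u <= x -> x <= v -> P (x, y).
Proof.
move=> Pu Pv ux xv; have [uv|vu] := ltrP u v; last by have -> : x = u by lra.
have := convP (l := (x - u) / (v - u)) Pu Pv; rewrite /=.
have -> : (1 - (x - u) / (v - u)) * y + (x - u) / (v - u) * y = y by ring.
have -> : (1 - (x - u) / (v - u)) * u + (x - u) / (v - u) * v = x by field; lra.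
by apply; [apply: divr_ge0 | rewrite ler_pdivrMr ?mul1r]; lra.
Qed.

Lemma horizontal_edgeP (a x0 : R) :
  (forall z, (P z /\ z.2 = a) <-> (z.2 = a /\ x0 <= z.1 /\ z.1 <= x0 + 1)) ->
  forall x, P (x, a) <-> x0 <= x <= x0 + 1.
Proof.
move=> Ha x; split=> [Px | /andP x0x].
  by case: (Ha (x, a)) => /(_ (conj Px erefl)) [_ /andP].
by case: (Ha (x, a)) => _ /(_ (conj erefl x0x)) [].
Qed.

(* The chord at height y is the convex combination of the two unit edges at that height. *)
Lemma unit_chord (a b x0 x1 y : R) :
  P (x0, a) -> P (x0 + 1, a) -> P (x1, b) -> P (x1 + 1, b) -> a <= y -> y <= b ->
  exists c, P (c, y) /\ P (c + 1, y).
Proof.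
move=> Pa0 Pa1 Pb0 Pb1 ay yb; have [ab|ab] := eqVneq a b.
  by exists x0; have -> : y = a by lra.
pose mu := (y - a) / (b - a).
have mu0 : 0 <= mu by apply: divr_ge0; lra.
have mu1 : mu <= 1.
  by rewrite /mu ler_pdivrMr ?mul1r; move: ab; rewrite neq_lt; case/orP; lra.
have ey : (1 - mu) * a + mu * b = y by rewrite /mu; field; rewrite subr_eq0 eq_sym.
exists ((1 - mu) * x0 + mu * x1); rewrite -ey; split.
  exact: (convP (l := mu) Pa0 Pb0).
have -> : (1 - mu) * x0 + mu * x1 + 1 = (1 - mu) * (x0 + 1) + mu * (x1 + 1) by ring.
exact: (convP (l := mu) Pa1 Pb1).
Qed.

Lemma unit_slice (c w y : R) : P (c, y) -> P (c + 1, y) -> P (w, y) ->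
  exists lo hi, [/\ lo <= w <= hi, 1 <= hi - lo &
                    forall x, lo <= x <= hi -> P (x, y)].
Proof.
move=> Pc Pc1 Pw; exists (Num.min c w), (Num.max (c + 1) w); split.
- by rewrite ge_min le_max !lexx !orbT.
- have : Num.min c w <= c by rewrite ge_min lexx.
  have : c + 1 <= Num.max (c + 1) w by rewrite le_max lexx.
  lra.
have Plo : P (Num.min c w, y) by rewrite /Num.min; case: ifP.
have Phi : P (Num.max (c + 1) w, y) by rewrite /Num.max; case: ifP.
by move=> x /andP[lox xhi]; apply: convex_set_hsegment Plo Phi lox xhi.
Qed.

Lemma horizontal_slice_unit_length (w y : R) :
  two_horizontal_unit_edges P -> P (w, y) ->
  exists lo hi, [/\ lo <= w <= hi, 1 <= hi - lo &
                    forall x, lo <= x <= hi -> P (x, y)].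
Proof.
move=> [a [b [x0 [x1 [Hab [/horizontal_edgeP Ha /horizontal_edgeP Hb]]]]]] Pw.
have [/= ay yb] := Hab _ Pw.
have [c [Pc Pc1]] : exists c, P (c, y) /\ P (c + 1, y).
  by apply: (@unit_chord a b x0 x1); rewrite // ?Ha ?Hb; apply/andP; lra.
exact: unit_slice Pc Pc1 Pw.
Qed.

End ConvexPlanarSets.

Section IncreasingSequences.
Variables (R : realType) (m : nat) (t : nat -> R).

Lemma increasing_le :
  (forall i, (i.+1 < m)%N -> t i < t i.+1) ->
  forall i j, (i <= j)%N -> (j < m)%N -> t i <= t j.
Proof.
move=> Ht i j ij; elim: j ij => [|j IHj] ij jm; first by rewrite leqn0 in ij; rewrite (eqP ij).
have [ij'|ji] := leqP i j; last by rewrite (@anti_leq i j.+1) ?ij.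
exact/(le_trans (IHj ij' (ltnW jm)))/ltW/Ht.
Qed.

Lemma small_gaps_hit_interval (i j : nat) (s lo hi : R) :
  (forall k, (k.+1 < m)%N -> t k.+1 - t k <= 1) ->
  (i <= j)%N -> (j < m)%N -> t i <= s <= t j -> lo <= s <= hi -> 1 <= hi - lo ->
  exists2 k, (k < m)%N & lo <= t k <= hi.
Proof.
move=> gaps ij jm /andP[tis stj] /andP[los shi] long.
elim: j ij jm stj => [|j IHj] ij jm stj.
  by exists 0%N => //; rewrite leqn0 in ij; rewrite (eqP ij) in tis; apply/andP; lra.
have [ij'|ji] := leqP i j; last first.
  by exists j.+1 => //; rewrite (@anti_leq i j.+1) ?ij // in tis; apply/andP; lra.
have [stj'|tjs] := lerP s (t j); first exact: IHj ij' (ltnW jm) stj'.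
have [tj1hi|hitj1] := lerP (t j.+1) hi; first by exists j.+1 => //; apply/andP; lra.
by exists j; [exact: ltnW | have := gaps j jm => gj; apply/andP; lra].
Qed.

End IncreasingSequences.

Section UnionOfTranslates.
Variables (R : realType) (P : pt R -> Prop) (m : nat) (t : nat -> R).
Hypotheses (convP : convex_set P) (edges : two_horizontal_unit_edges P).
Hypothesis t_incr : forall i, (i.+1 < m)%N -> t i < t i.+1.

Lemma union_translates_convex :
  (forall i, (i.+1 < m)%N -> t i.+1 - t i <= 1) ->
  convex_set (union_translates P m t).
Proof.
move=> gaps p q l [i [im Pp]] [j [jm Pq]] l0 l1.
pose w := (1 - l) * (p.1 - t i) + l * (q.1 - t j).
pose s := (1 - l) * t i + l * t j.
have Pw : P (w, (1 - l) * p.2 + l * q.2) by apply: (convP (l := l) Pp Pq).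
have [lo [hi [/andP[low whi] long slice]]] :=
  horizontal_slice_unit_length convP edges Pw.
have [i' [j' [ij' j'm sij']]] :
    exists i' j', [/\ (i' <= j')%N, (j' < m)%N & t i' <= s <= t j'].
  have [ij|ji] := leqP i j.
    have := increasing_le t_incr ij jm => tij.
    by exists i, j; split => //; rewrite /s; apply/andP; split; nra.
  have := increasing_le t_incr (ltnW ji) im => tji.
  exists j, i; split; [exact: ltnW | by [] |].
  by rewrite /s; apply/andP; split; nra.
have [k km /andP[tklo tkhi]] : exists2 k, (k < m)%N & w + s - hi <= t k <= w + s - lo.
  by apply: (small_gaps_hit_interval gaps ij' j'm sij'); [apply/andP|]; lra.
exists k; split => //; rewrite /translate /=.
have -> : (1 - l) * p.1 + l * q.1 - t k = w + s - t k by rewrite /w /s; ring.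
by apply: slice; apply/andP; lra.
Qed.

(* If t_{i+1} - t_i > 1, the midpoint of the right end of the bottom edge of
   P + t_i and the left end of the bottom edge of P + t_{i+1} lies on no P + t_k. *)
Lemma convex_union_translates_small_gaps :
  convex_set (union_translates P m t) ->
  forall i, (i.+1 < m)%N -> t i.+1 - t i <= 1.
Proof.
move=> convU i im; rewrite leNgt; apply/negP => wide.
have [a [b [x0 [x1 [_ [bottom_edge _]]]]]] := edges.
have bottom := horizontal_edgeP bottom_edge.
have U1 : union_translates P m t (x0 + 1 + t i, a).
  by exists i; split; [exact: ltnW | rewrite /translate /= addrK bottom; apply/andP; lra].
have U2 : union_translates P m t (x0 + t i.+1, a).
  by exists i.+1; split => //; rewrite /translate /= addrK bottom; apply/andP; lra.
have [k [km]] := convU _ _ (1 / 2) U1 U2 ltac:(lra) ltac:(lra).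
rewrite /translate /=.
have -> : (1 - 1 / 2) * a + 1 / 2 * a = a by lra.
rewrite bottom => /andP[lo hi].
have [ki|ik] := leqP k i.
  by have := increasing_le t_incr ki (ltnW im); lra.
by have := increasing_le t_incr ik km; lra.
Qed.

End UnionOfTranslates.

Theorem proposition2p9 (R : realType) (P : pt R -> Prop) (m : nat) (t : nat -> R) :
  convex_polygon P -> two_horizontal_unit_edges P ->
  (forall i : nat, (i.+1 < m)%N -> t i < t i.+1) ->
  ((forall i : nat, (i.+1 < m)%N -> t i.+1 - t i <= 1) <->
   convex_set (union_translates P m t)).
Proof.
move=> /convex_polygon_convex convP edges t_incr; split.
- exact: union_translates_convex.
- exact: convex_union_translates_small_gaps.
Qed.
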